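(* In the setting of the context, let $\alpha,\beta\in R$ be distinct roots with $\pi(\alpha)=\pi(\beta)$. Then $\pi_k[\mathfrak g_\alpha,\mathfrak g_{-\beta}]\subseteq C_{\mathfrak g}(\mathfrak h^\sigma)$ for each $k\in\mathbb Z$. Moreover, $\pi[\mathfrak g_\alpha,\mathfrak g_{-\beta}]=0$.
   Context: All Lie algebras are over $\mathbb C$. An extended affine Lie algebra (EALA) is a triple $(\mathfrak g,(\cdot,\cdot),\mathfrak h)$ where $\mathfrak g$ is a Lie algebra, $\mathfrak h$ a subalgebra and $(\cdot,\cdot)$ a bilinear form such that: the form is symmetric, non-degenerate, invariant; $\mathfrak h$ is finite-dimensional and $\mathfrak g=\bigoplus_{\alpha\in\mathfrak h^*}\mathfrak g_\alpha$, $\mathfrak g_\alpha=\{x:[h,x]=\alpha(h)x\ \forall h\in\mathfrak h\}$, $\mathfrak g_0=\mathfrak h$; with root system $R=\{\alpha:\mathfrak g_\alpha\ne0\}$ ($\mathfrak g_\gamma=0$ for $\gamma\notin R$), $t_\alpha\in\mathfrak h$ given by $\alpha(h)=(h,t_\alpha)$, $(\alpha,\beta)=(t_\alpha,t_\beta)$, $R^\times=\{\alpha\in R:(\alpha,\alpha)\ne0\}$, $R^0=R\setminus R^\times$: $\mathrm{ad}\,x$ locally nilpotent for $x\in\mathfrak g_\alpha$, $\alpha\in R^\times$; $R$ discrete; $R^\times$ connected and isotropic roots non-isolated. Root systems assumed reduced. Setting: $(\mathfrak g,(\cdot,\cdot),\mathfrak h)$ is an EALA with root system $R$; $\sigma$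 is an automorphism of $\mathfrak g$ with $\sigma^m=\mathrm{id}$ ($m\ge1$), $\sigma(\mathfrak h)=\mathfrak h$, $(\sigma x,\sigma y)=(x,y)$ for all $x,y$, and $C_{\mathfrak g^\sigma}(\mathfrak h^\sigma)=\mathfrak h^\sigma$, where $\mathfrak g^\sigma,\mathfrak h^\sigma$ are the fixed points and $C$ denotes centralizer. $\sigma$ acts on $\mathfrak h^*$ by $\sigma(\alpha)(h)=\alpha(\sigma^{-1}h)$. Let $\omega$ be a primitive $m$-th root of unity and $\pi_j=\frac1m\sum_{i=0}^{m-1}\omega^{-ij}\sigma^i$ (indices mod $m$), acting on $\mathfrak g$ and on $\mathfrak h^*$; $\pi=\pi_0$. *)

From HB Require Import structures.
From mathcomp Require Import all_boot all_order all_algebra all_field.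

Set Implicit Arguments.
Unset Strict Implicit.
Unset Printing Implicit Defensive.

Import Order.TTheory GRing.Theory Num.Theory.
Local Open Scope ring_scope.

(* The Lie algebra g is an algC-module V with a bracket br.
   The Cartan subalgebra h is a finite-dimensional algC-vector space H
   embedded in V by the injective linear map iota.  Elements of h^* are
   functions H -> algC (weights with non-zero weight space are automatically
   linear). *)

Definition is_lie_bracket (V : lmodType algC) (br : V -> V -> V) : Prop :=
  [/\ (forall (a : algC) (x y z : V), br (a *: x + y) z = a *: br x z + br y z),
      (forall (a : algC) (x y z : V), br x (a *: y + z) = a *: br x y + br x z),
      (forall x : V, br x x = 0) &
      (forall x y z : V, br x (br y z) + br y (br z x) + br z (br x y) = 0)].

Definition is_good_form (V : lmodType algC) (br : V -> V -> V)
    (B : V -> V -> algC) : Prop :=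
  [/\ (forall (a : algC) (x y z : V), B (a *: x + y) z = a * B x z + B y z),
      (forall x y : V, B x y = B y x),
      (forall x : V, (forall y : V, B x y = 0) -> x = 0) &
      (forall x y z : V, B (br x y) z = B x (br y z))].

Definition wspace (V : lmodType algC) (br : V -> V -> V) (H : vectType algC)
    (iota : H -> V) (f : H -> algC) (x : V) : Prop :=
  forall a : H, br (iota a) x = f a *: x.

Definition root_of (V : lmodType algC) (br : V -> V -> V) (H : vectType algC)
    (iota : H -> V) (f : H -> algC) : Prop :=
  exists x : V, x <> 0 /\ wspace br iota f x.

Definition is_t (V : lmodType algC) (B : V -> V -> algC) (H : vectType algC)
    (iota : H -> V) (f : H -> algC) (t : H) : Prop :=
  forall a : H, f a = B (iota a) (iota t).

Definition nonisotropic_root (V : lmodType algC) (br : V -> V -> V)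
    (B : V -> V -> algC) (H : vectType algC) (iota : H -> V) (f : H -> algC) :=
  root_of br iota f /\ exists t, is_t B iota f t /\ B (iota t) (iota t) <> 0.

Definition isotropic_root (V : lmodType algC) (br : V -> V -> V)
    (B : V -> V -> algC) (H : vectType algC) (iota : H -> V) (f : H -> algC) :=
  root_of br iota f /\ exists t, is_t B iota f t /\ B (iota t) (iota t) = 0.

Definition orth_forms (V : lmodType algC) (B : V -> V -> algC)
    (H : vectType algC) (iota : H -> V) (f g : H -> algC) :=
  exists tf tg, [/\ is_t B iota f tf, is_t B iota g tg &
                    B (iota tf) (iota tg) = 0].

Definition hdist (H : vectType algC) (f g : H -> algC) : algC :=
  \sum_(b <- vbasis (fullv : {vspace H})) `|f b - g b|.

Definition is_EALA (V : lmodType algC) (br : V -> V -> V) (B : V -> V -> algC)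
    (H : vectType algC) (iota : {linear H -> V}) : Prop :=
  let R := root_of br iota in
  let Rx := nonisotropic_root br B iota in
  let R0 := isotropic_root br B iota in
  is_lie_bracket br /\ is_good_form br B /\ injective iota /\
   (forall a b : H, exists c : H, br (iota a) (iota b) = iota c) /\
   (forall x : V, wspace br iota (fun _ => 0) x <-> exists a : H, x = iota a) /\
   (forall x : V, exists (n : nat) (f : 'I_n -> H -> algC) (v : 'I_n -> V),
        (forall i, wspace br iota (f i) (v i)) /\ x = \sum_(i < n) v i) /\
   (forall (n : nat) (f : 'I_n -> H -> algC) (v : 'I_n -> V),
        injective f -> (forall i, wspace br iota (f i) (v i)) ->
        \sum_(i < n) v i = 0 -> forall i, v i = 0) /\
   (forall (f : H -> algC) (x : V), Rx f -> wspace br iota f x ->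
        forall y : V, exists n : nat, iter n (br x) y = 0) /\
   (forall f, R f -> exists2 eps : algC, 0 < eps &
        forall g, R g -> hdist f g < eps -> g = f) /\
   (* R^x connected (indecomposable) *)
   (forall P1 P2 : (H -> algC) -> Prop,
        (forall f, Rx f <-> P1 f \/ P2 f) ->
        (forall f, ~ (P1 f /\ P2 f)) ->
        (forall f g, P1 f -> P2 g -> orth_forms B iota f g) ->
        (forall f, ~ P1 f) \/ (forall f, ~ P2 f)) /\
   (* isotropic roots are non-isolated *)
   (forall d, R0 d -> exists f, Rx f /\ R (fun a => f a + d a)) /\
   (forall f, Rx f -> ~ R (fun a => 2 * f a)).

Definition twisting_aut (V : lmodType algC) (br : V -> V -> V)
    (B : V -> V -> algC) (H : vectType algC) (iota : {linear H -> V})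
    (sigma : {linear V -> V}) (sH : H -> H) (m : nat) : Prop :=
  (0 < m)%N /\
      (forall x y : V, sigma (br x y) = br (sigma x) (sigma y)) /\
      (forall x : V, iter m (fun v => sigma v) x = x) /\
      (forall a : H, iota (sH a) = sigma (iota a)) /\
      (forall x y : V, B (sigma x) (sigma y) = B x y) /\
      (forall x : V,
         (sigma x = x /\ forall a : H, sigma (iota a) = iota a -> br (iota a) x = 0)
         <-> exists2 a : H, x = iota a & sigma (iota a) = iota a).

Definition pi_g (V : lmodType algC) (sigma : {linear V -> V}) (m : nat)
    (omega : algC) (k : int) (x : V) : V :=
  (m%:R)^-1 *: \sum_(i < m) (omega ^ (- (i%:Z * k))) *: iter i (fun v => sigma v) x.

(* action of sigma on h^*: sigma(f)(a) = f(sigma^{-1} a), sigma^{-1} = sigma^{m-1} *)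
Definition act_dual (H : vectType algC) (sH : H -> H) (m : nat)
    (f : H -> algC) : H -> algC :=
  fun a => f (iter m.-1 sH a).

Definition pi_dual (H : vectType algC) (sH : H -> H) (m : nat)
    (f : H -> algC) : H -> algC :=
  fun a => (m%:R)^-1 * \sum_(i < m) iter i (act_dual sH m) f a.

Definition bracket_span (V : lmodType algC) (br : V -> V -> V)
    (P Q : V -> Prop) (z : V) : Prop :=
  exists (n : nat) (x y : 'I_n -> V),
    (forall i, P (x i) /\ Q (y i)) /\ z = \sum_(i < n) br (x i) (y i).

Definition centralizes_hsigma (V : lmodType algC) (br : V -> V -> V)
    (H : vectType algC) (iota : H -> V) (sigma : {linear V -> V}) (z : V) : Prop :=
  forall a : H, sigma (iota a) = iota a -> br (iota a) z = 0.

From HB Require Import structures.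
From mathcomp Require Import all_boot all_order all_algebra all_field.
From Stdlib Require Import Classical FunctionalExtensionality.
Import GRing.Theory Num.Theory.
Local Open Scope ring_scope.
Set Implicit Arguments.
Unset Strict Implicit.
Unset Printing Implicit Defensive.

(* An element z of [g_alpha, g_-beta] has weight alpha - beta, which vanishes
   on h^sigma because pi(alpha) = pi(beta) and pi restricts to the identity
   on sigma-fixed points of h.  Hence z, all its sigma-translates and every
   pi_k z centralize h^sigma.  For k = 0, pi z is moreover sigma-fixed, so
   C_{g^sigma}(h^sigma) = h^sigma puts it in h.  Since alpha <> beta, z has a
   nonzero weight and is therefore orthogonal to h, and so are its
   sigma-translates and pi z.  The form being non-degenerate on h (g is the
   sum of its weight spaces and h is orthogonal to every other weight space),
   pi z = 0. *)

Lemma iter_morph2 (T : Type) (s : T -> T) (op : T -> T -> T)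
    (sM : {morph s : x y / op x y}) i : {morph iter i s : x y / op x y}.
Proof. by elim: i => [|i IH] x y //=; rewrite IH sM. Qed.

Lemma iter_comm (S T : Type) (f : S -> T) (s : S -> S) (t : T -> T)
    (fst : forall x, f (s x) = t (f x)) i x : f (iter i s x) = iter i t (f x).
Proof. by elim: i x => [|i IH] x //=; rewrite fst IH. Qed.

Lemma sum_iter_shift (V : nmodType) (s : V -> V) (m : nat) (x : V)
    (m_gt0 : (0 < m)%N) (smx : iter m s x = x) :
  \sum_(i < m) s (iter i s x) = \sum_(i < m) iter i s x.
Proof.
case: m m_gt0 smx => // m _ smx; rewrite big_ord_recr big_ord_recl /=.
by rewrite -iterS smx addrC.
Qed.

Section LieBracket.
Variables (V : lmodType algC) (br : V -> V -> V).
Hypothesis br_lie : is_lie_bracket br.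

Lemma brDr x y z : br z (x + y) = br z x + br z y.
Proof. by case: br_lie => _ brDZr _ _; have := brDZr 1 z x y; rewrite !scale1r. Qed.

Lemma br0r x : br x 0 = 0.
Proof. by apply: (addrI (br x 0)); rewrite -brDr !addr0. Qed.

Lemma brZr a x z : br z (a *: x) = a *: br z x.
Proof. by case: br_lie => _ brDZr _ _; rewrite -(addr0 (a *: x)) brDZr br0r addr0. Qed.

Lemma br_sumr n (F : 'I_n -> V) x :
  br x (\sum_(i < n) F i) = \sum_(i < n) br x (F i).
Proof. exact: (big_morph (br x) (fun y z => brDr y z x) (br0r x)). Qed.

Lemma br_antisym x y : br y x = - br x y.
Proof.
case: br_lie => brDZl _ brxx _; have brDl u v w : br (u + v) w = br u w + br v w.
  by have := brDZl 1 u v w; rewrite !scale1r.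
have := brxx (x + y); rewrite brDl !brDr !brxx add0r addr0 => /eqP.
by rewrite addr_eq0 => /eqP ->; rewrite opprK.
Qed.

Variables (H : vectType algC) (iota : H -> V).

Lemma wspace_br f g x y :
  wspace br iota f x -> wspace br iota g y ->
  wspace br iota (fun a => f a + g a) (br x y).
Proof.
move=> xf yg a; case: br_lie => _ _ _ jacobi.
have := jacobi (iota a) x y.
rewrite (br_antisym (iota a) y) yg -scaleNr brZr xf brZr (br_antisym x y) scalerN.
move=> /eqP; rewrite -addrA addr_eq0 => /eqP ->.
by rewrite opprD !opprK scaleNr opprK scalerDl addrC.
Qed.

Lemma bracket_span_wspace f g z :
  bracket_span br (wspace br iota f) (wspace br iota g) z ->
  wspace br iota (fun a => f a + g a) z.
Proof.
move=> [n [x [y [xy_w ->]]]] a; rewrite br_sumr scaler_sumr.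
by apply: eq_bigr => i _; case: (xy_w i) => xf yg; rewrite (wspace_br xf yg).
Qed.

Variable sigma : {linear V -> V}.
Hypothesis sigma_br : forall x y, sigma (br x y) = br (sigma x) (sigma y).

Lemma centralizes_hsigma_iter i z :
  centralizes_hsigma br iota sigma z ->
  centralizes_hsigma br iota sigma (iter i (fun v => sigma v) z).
Proof.
move=> zc a sa; rewrite -{1}(iter_fix i sa) -(iter_morph2 sigma_br) (zc a sa).
exact: iter_fix (linear0 sigma).
Qed.

Lemma centralizes_hsigma_pi_g m omega k z :
  centralizes_hsigma br iota sigma z ->
  centralizes_hsigma br iota sigma (pi_g sigma m omega k z).
Proof.
move=> zc a sa; rewrite /pi_g brZr br_sumr big1 ?scaler0 // => i _.
by rewrite brZr (centralizes_hsigma_iter i zc) // scaler0.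
Qed.

End LieBracket.

Section InvariantForm.
Variables (V : lmodType algC) (br : V -> V -> V) (B : V -> V -> algC).
Hypotheses (br_lie : is_lie_bracket br) (B_good : is_good_form br B).

Lemma BDl x y z : B (x + y) z = B x z + B y z.
Proof. by case: B_good => BDZl _ _ _; have := BDZl 1 x y z; rewrite scale1r mul1r. Qed.

Lemma B0l z : B 0 z = 0.
Proof. by apply: (addrI (B 0 z)); rewrite -BDl !addr0. Qed.

Lemma BZl a x z : B (a *: x) z = a * B x z.
Proof. by case: B_good => BDZl _ _ _; rewrite -(addr0 (a *: x)) BDZl B0l addr0. Qed.

Lemma B_suml n (F : 'I_n -> V) z : B (\sum_(i < n) F i) z = \sum_(i < n) B (F i) z.
Proof. exact: (big_morph (B ^~ z) (fun x y => BDl x y z) (B0l z)). Qed.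

Variables (H : vectType algC) (iota : H -> V).
Hypothesis wspace0_cartan :
  forall x, wspace br iota (fun _ => 0) x <-> exists a, x = iota a.

Lemma cartan_abelian a b : br (iota a) (iota b) = 0.
Proof.
have [_ cartan_w0] := wspace0_cartan (iota b).
by rewrite (cartan_w0 (ex_intro _ b erefl)) scale0r.
Qed.

Lemma form_wspace_cartan f v b c :
  wspace br iota f v -> f b != 0 -> B v (iota c) = 0.
Proof.
move=> vf fb; case: B_good => _ B_sym _ B_inv.
have := B_inv v (iota b) (iota c).
rewrite cartan_abelian (B_sym v) B0l (br_antisym br_lie) vf -scaleNr BZl => /eqP.
by rewrite mulf_eq0 oppr_eq0 (negbTE fb) => /eqP.
Qed.

Hypothesis weight_decomposition :
  forall x, exists (n : nat) (f : 'I_n -> H -> algC) (v : 'I_n -> V),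
    (forall i, wspace br iota (f i) (v i)) /\ x = \sum_(i < n) v i.

Lemma form_cartan_nondegenerate a :
  (forall b, B (iota a) (iota b) = 0) -> iota a = 0.
Proof.
move=> a_orth; case: B_good => _ B_sym B_nondeg _; apply: B_nondeg => x.
have [n [f [v [vf ->]]]] := weight_decomposition x.
rewrite B_sym B_suml big1 // => i _.
have [[b fb] | f0] := classic (exists b, f i b != 0).
  exact: form_wspace_cartan (vf i) fb.
have /wspace0_cartan [c ->] : wspace br iota (fun _ => 0) (v i).
  move=> c; rewrite vf; congr (_ *: _); apply/eqP; apply: contraT => fc.
  by case: f0; exists c.
by rewrite B_sym.
Qed.

End InvariantForm.

Lemma pi_dual_fixed (H : vectType algC) (sH : H -> H) m f a :
  (0 < m)%N -> sH a = a -> pi_dual sH m f a = f a.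
Proof.
move=> m_gt0 sa; rewrite /pi_dual.
have iter_act i : iter i (act_dual sH m) f a = f a.
  by elim: i => [|i IH] //=; rewrite /act_dual (iter_fix _ sa).
under eq_bigr => i _ do rewrite iter_act.
rewrite sumr_const card_ord -[f a *+ m]mulr_natl mulrA mulVf ?mul1r //.
by rewrite pnatr_eq0 -lt0n.
Qed.

Section Twisting.
Variables (V : lmodType algC) (br : V -> V -> V) (B : V -> V -> algC).
Variables (H : vectType algC) (iota : H -> V) (sigma : {linear V -> V}).
Variables (sH : H -> H) (m : nat) (omega : algC).
Hypotheses (m_gt0 : (0 < m)%N)
           (sigma_period : forall x, iter m (fun v => sigma v) x = x).
Hypotheses (sigma_iota : forall a, iota (sH a) = sigma (iota a))
           (sigma_B : forall x y, B (sigma x) (sigma y) = B x y).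

Lemma pi_g0E x :
  pi_g sigma m omega 0 x = m%:R^-1 *: \sum_(i < m) iter i (fun v => sigma v) x.
Proof.
by congr (_ *: _); apply: eq_bigr => i _; rewrite mulr0 oppr0 expr0z scale1r.
Qed.

Lemma pi_g0_fixed x : sigma (pi_g sigma m omega 0 x) = pi_g sigma m omega 0 x.
Proof.
by rewrite pi_g0E linearZ linear_sum /= (sum_iter_shift m_gt0 (sigma_period x)).
Qed.

Lemma orthogonal_cartan_sigma z :
  (forall b, B z (iota b) = 0) -> forall b, B (sigma z) (iota b) = 0.
Proof.
move=> z_orth b; move: m_gt0 (sigma_period (iota b)); case: m => // n _.
rewrite iterS => <-; rewrite -(iter_comm sigma_iota) sigma_B; exact: z_orth.
Qed.

Hypothesis B_good : is_good_form br B.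

Lemma pi_g0_orthogonal_cartan z :
  (forall b, B z (iota b) = 0) ->
  forall b, B (pi_g sigma m omega 0 z) (iota b) = 0.
Proof.
move=> z_orth b; rewrite pi_g0E (BZl B_good) (B_suml B_good) big1 ?mulr0 // => i _.
by elim: (val i) b => [|j IH] b //=; apply: orthogonal_cartan_sigma.
Qed.

Hypothesis br_lie : is_lie_bracket br.
Hypothesis wspace0_cartan :
  forall x, wspace br iota (fun _ => 0) x <-> exists a, x = iota a.
Hypothesis weight_decomposition :
  forall x, exists (n : nat) (f : 'I_n -> H -> algC) (v : 'I_n -> V),
    (forall i, wspace br iota (f i) (v i)) /\ x = \sum_(i < n) v i.
Hypothesis centralizer_hsigma :
  forall x, (sigma x = x /\ centralizes_hsigma br iota sigma x)
            <-> exists2 a, x = iota a & sigma (iota a) = iota a.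
Hypothesis sigma_br : forall x y, sigma (br x y) = br (sigma x) (sigma y).

Lemma pi_g0_eq0 z :
  centralizes_hsigma br iota sigma z -> (forall b, B z (iota b) = 0) ->
  pi_g sigma m omega 0 z = 0.
Proof.
move=> zc z_orth.
have [a pi_z _] : exists2 a, pi_g sigma m omega 0 z = iota a & sigma (iota a) = iota a.
  apply/centralizer_hsigma; split; first exact: pi_g0_fixed.
  exact: centralizes_hsigma_pi_g.
rewrite pi_z; apply: (form_cartan_nondegenerate br_lie B_good wspace0_cartan
                        weight_decomposition) => b.
by rewrite -pi_z; apply: pi_g0_orthogonal_cartan.
Qed.

End Twisting.

Theorem lemma5p3 (V : lmodType algC) (br : V -> V -> V) (B : V -> V -> algC)
    (H : vectType algC) (iota : {linear H -> V}) (sigma : {linear V -> V})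
    (sH : H -> H) (m : nat) (omega : algC) :
  is_EALA br B iota ->
  twisting_aut br B iota sigma sH m ->
  m.-primitive_root omega ->
  forall alpha beta : H -> algC,
    root_of br iota alpha -> root_of br iota beta -> alpha <> beta ->
    pi_dual sH m alpha = pi_dual sH m beta ->
    (forall (k : int) (z : V),
        bracket_span br (wspace br iota alpha)
                        (wspace br iota (fun a => - beta a)) z ->
        centralizes_hsigma br iota sigma (pi_g sigma m omega k z)) /\
    (forall z : V,
        bracket_span br (wspace br iota alpha)
                        (wspace br iota (fun a => - beta a)) z ->
        pi_g sigma m omega 0 z = 0).
Proof.
move=> [br_lie [B_good [iota_inj [_ [wspace0_cartan [weight_decomposition _]]]]]].
move=> [m_gt0 [sigma_br [sigma_period [sigma_iota [sigma_B centralizer_hsigma]]]]] _.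
move=> alpha beta _ _ alpha_neq_beta pi_alpha_beta.
have z_weight :=
  bracket_span_wspace br_lie (iota := iota) (f := alpha) (g := fun a => - beta a).
have alpha_beta_hsigma a : sigma (iota a) = iota a -> alpha a = beta a.
  move=> sa; have sHa : sH a = a by apply: iota_inj; rewrite sigma_iota.
  by rewrite -(pi_dual_fixed alpha m_gt0 sHa) pi_alpha_beta pi_dual_fixed.
have z_centralizes z : bracket_span br (wspace br iota alpha)
                         (wspace br iota (fun a => - beta a)) z ->
                       centralizes_hsigma br iota sigma z.
  by move=> /z_weight zw a sa; rewrite zw alpha_beta_hsigma // subrr scale0r.
have [b ab] : exists b, alpha b != beta b.
  apply: NNPP => all_eq; apply: alpha_neq_beta; apply: functional_extensionality => b.
  by apply/eqP; apply: contraT => ab; case: all_eq; exists b.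
split=> [k z /z_centralizes | z z_span]; first exact: centralizes_hsigma_pi_g.
apply: (pi_g0_eq0 _ m_gt0 sigma_period sigma_iota sigma_B B_good br_lie
          wspace0_cartan weight_decomposition centralizer_hsigma sigma_br).
  exact: z_centralizes.
move=> c; apply: (form_wspace_cartan br_lie B_good wspace0_cartan (b := b) c).
  exact: z_weight.
by rewrite subr_eq0.
Qed.
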